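(* Let $2/5 < r < 1$, put $p = \left\lceil \frac{5r-2}{1-r} \right\rceil$ and $\alpha = p - \frac{5r-2}{1-r}$ (so $p \ge 1$ and $0 \le \alpha < 1$), and let $\alpha = (0.\alpha_1 \alpha_2 \cdots)_2$ be the binary expansion of $\alpha$ with infinitely many zero digits. Define binary words $w^{\langle 0 \rangle} = \emptyset$ (the empty word) and $w^{\langle i \rangle} = w^{\langle i-1 \rangle} w^{\langle i-1 \rangle}\, 01011\, 0^{p - \alpha_i}$ for $i \geq 1$. Let $\ell_i$ be the length of $w^{\langle i \rangle}$, $\zeta_i = |Z(w^{\langle i \rangle})|$ and $\pi_i = |P(w^{\langle i \rangle})|$. Then for every $i \geq 1$, $$\ell_i = (2^i - 1)(p+5) - \sum_{j=1}^{i} 2^{i-j}\alpha_j,\qquad \zeta_i = (2^i - 1)(p+2) - \sum_{j=1}^{i} 2^{i-j}\alpha_j,$$ $$\pi_i = (2^i - 1)p - 1 - \sum_{j=1}^{i} 2^{i-j}\alpha_j + \delta_{p,1}\alpha_i,$$ where $\delta_{p,1}$ is the Kronecker delta.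
   Context: For a binary word $x$, $x^j$ denotes $j$ concatenated copies of $x$ ($x^0$ is empty), and juxtaposition denotes concatenation. For a binary word $w = w_1 \cdots w_\ell$ of length $\ell$, $Z(w)$ is the set of indices $i$ with $w_i = 0$, and $P(w)$ is the set of indices $i \geq 2$ such that at least one of the following holds: (i) $\ell \geq i$ and $w_{i-1} w_i = 00$; (ii) $\ell \geq i+2$ and $w_{i-1} w_i w_{i+1} w_{i+2} = 0100$; (iii) $\ell \geq i+3$ and $w_{i-1} \cdots w_{i+3} = 01010$. *)

From Stdlib Require Import Reals ZArith.
From mathcomp Require Import all_boot.
Set Implicit Arguments. Unset Strict Implicit. Unset Printing Implicit Defensive.

(* binary words: false = letter 0, true = letter 1 *)
Definition word := seq bool.

(* 1-indexed letter w_k (only used for 1 <= k <= size w) *)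
Definition letter (w : word) (k : nat) : bool := nth true w k.-1.
Definition is0 (w : word) (k : nat) : bool := ~~ letter w k.

Definition cardZ (w : word) : nat := count negb w.

(* membership in P(w), for an index i >= 2 *)
Definition inP (w : word) (i : nat) : bool :=
  [|| (i <= size w) && is0 w i.-1 && is0 w i
    , (i.+2 <= size w) && is0 w i.-1 && letter w i && is0 w i.+1 && is0 w i.+2
    | (i.+3 <= size w) && is0 w i.-1 && letter w i && is0 w i.+1
                       && letter w i.+2 && is0 w i.+3 ].

Definition cardP (w : word) : nat := count (inP w) (iota 2 (size w - 1)).

Fixpoint wseq (p : nat) (a : nat -> nat) (i : nat) : word :=
  match i with
  | 0 => [::]
  | i'.+1 => wseq p a i' ++ wseq p a i' ++ [:: false; true; false; true; true]
               ++ nseq (p - a i'.+1) false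
  end.

Definition digsum (a : nat -> nat) (i : nat) : nat :=
  \sum_(1 <= j < i.+1) 2 ^ (i - j) * a j.

Section RealPart.
Local Open Scope R_scope.
Definition ratio (r : R) : R := (5 * r - 2) / (1 - r).
Definition bin_term (a : nat -> nat) (k : nat) : R := INR (a (S k)) / 2 ^ (S k).
End RealPart.

From Stdlib Require Import Reals ZArith Lra Lia.
From mathcomp Require Import all_boot.
From mathcomp Require Import zify.

(* Whether an index belongs to P(w) depends only on the at most five letters
   starting just before it, so |P(w)| counts the suffixes of w beginning with
   00, 0100 or 01010.  Hence |P| is additive under concatenation up to the
   junctions.  Every w<i> (i >= 1) starts with the inert block 01011, so the
   only new occurrences at the junctions of w<i-1> w<i-1> 01011 0^(p-a_i)
   are the pairs 00 at the ends of the blocks 0^(p - a_(i-1)) followed by the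
   block 01011.  This gives linear recurrences for l_i, zeta_i and pi_i, whose
   solutions are the stated formulas. *)

Definition headP (s : word) : bool :=
  match s with
  | false :: false :: _ => true
  | false :: true :: false :: false :: _ => true
  | false :: true :: false :: true :: false :: _ => true
  | _ => false
  end.

Lemma inP_2 (w : word) : inP w 2 = headP w.
Proof. by case: w => [|[] [|[] [|[] [|[] [|[] s]]]]]. Qed.

Lemma cardP_cons (c : bool) (w : word) : cardP (c :: w) = headP (c :: w) + cardP w.
Proof.
rewrite /cardP [size _]/= subSS subn0; case: w => [|d w]; first by case: c.
rewrite [size _]/= subSS subn0 [iota 2 _]/= [count _ (2 :: _)]/= inP_2.
congr (_ + _); rewrite -[3]/(1 + 2) iotaDl count_map.
apply: eq_in_count => k; rewrite mem_iota => /andP[k_ge2 _].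
by case: k k_ge2 => [|[|k]].
Qed.

Lemma headP_cat (s t : word) : 5 <= size s -> headP (s ++ t) = headP s.
Proof. by case: s => [|[] [|[] [|[] [|[] [|[] s]]]]]. Qed.

Lemma cardP_cat_overlap (x m y : word) : 4 <= size m ->
  cardP (x ++ m ++ y) + cardP m = cardP (x ++ m) + cardP (m ++ y).
Proof.
move=> size_m; elim: x => [|c x IHx]; first by rewrite addnC.
rewrite !cat_cons !cardP_cons -cat_cons catA headP_cat -?catA; last first.
  by rewrite /= size_cat; lia.
rewrite -addnA IHx -cat_cons; lia.
Qed.

Lemma cardP_nseq0 (k : nat) : cardP (nseq k false) = k.-1.
Proof. by elim: k => [|[|k] IHk] //; rewrite [nseq _ _]/= cardP_cons IHk. Qed.

Lemma cardP_nseq0_cat (k : nat) (z : word) :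
  cardP (nseq k false ++ false :: z) = k + cardP (false :: z).
Proof. by elim: k => [|[|k] IHk] //; rewrite cat_cons cardP_cons IHk. Qed.

Definition blk01011 : word := [:: false; true; false; true; true].

Lemma cardP_blk01011_cat (y : word) : cardP (blk01011 ++ y) = cardP y.
Proof. by rewrite !cat_cons !cardP_cons. Qed.

Lemma cardP_cat_blk01011 (u : word) (k : nat) (v : word) :
  cardP ((u ++ blk01011 ++ nseq k false) ++ blk01011 ++ v) =
  cardP (u ++ blk01011 ++ nseq k false) + cardP (blk01011 ++ v) + (0 < k).
Proof.
have := cardP_cat_overlap u (blk01011 ++ nseq k false) (blk01011 ++ v) isT.
rewrite -!catA !cardP_blk01011_cat cardP_nseq0 (cardP_nseq0_cat k (behead blk01011 ++ v)).
rewrite -[false :: _]/(blk01011 ++ v) cardP_blk01011_cat; lia.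
Qed.

Lemma digsumS (a : nat -> nat) (i : nat) : digsum a i.+1 = 2 * digsum a i + a i.+1.
Proof.
rewrite /digsum big_nat_recr //= subnn mul1n; congr (_ + _).
rewrite big_distrr; apply: eq_big_nat => j /andP[_ j_le_i].
by rewrite /= mulnA -expnS subSn.
Qed.

Lemma ratio_gt0 {r : R} : Rlt (2 / 5) r -> Rlt r 1 -> Rlt 0 (ratio r).
Proof. by move=> r_gt r_lt1; apply: Rdiv_lt_0_compat; lra. Qed.

Section Words.
Variables (p : nat) (a : nat -> nat).
Local Notation w := (wseq p a).

Lemma wseqS (n : nat) : w n.+1 = w n ++ w n ++ blk01011 ++ nseq (p - a n.+1) false.
Proof. by []. Qed.

Lemma wseqS_prefix (n : nat) : exists v, w n.+1 = blk01011 ++ v.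
Proof.
elim: n => [|n [v IHn]]; first by eexists.
by rewrite wseqS IHn -catA; eexists.
Qed.

Lemma size_wseqS (n : nat) : size (w n.+1) = 2 * size (w n) + 5 + (p - a n.+1).
Proof. by rewrite wseqS !size_cat size_nseq /=; lia. Qed.

Lemma cardZ_wseqS (n : nat) : cardZ (w n.+1) = 2 * cardZ (w n) + 2 + (p - a n.+1).
Proof. by rewrite /cardZ wseqS !count_cat count_nseq /=; lia. Qed.

Lemma cardP_wseq1 : cardP (w 1) = (p - a 1).-1.
Proof. by rewrite wseqS cardP_blk01011_cat cardP_nseq0. Qed.

Lemma cardP_wseqSS (n : nat) : cardP (w n.+2) =
  2 * cardP (w n.+1) + (p - a n.+2).-1 + 2 * (0 < p - a n.+1).
Proof.
have [v wn1_eq] := wseqS_prefix n.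
have wn1_split : w n.+1 = (w n ++ w n) ++ blk01011 ++ nseq (p - a n.+1) false.
  by rewrite wseqS catA.
set t := blk01011 ++ nseq (p - a n.+2) false.
have tail_eq : cardP (w n.+1 ++ t) = cardP (w n.+1) + (p - a n.+2).-1 + (0 < p - a n.+1).
  by rewrite {1}wn1_split cardP_cat_blk01011 -wn1_split cardP_blk01011_cat cardP_nseq0.
have -> : w n.+2 = (w n.+1) ++ blk01011 ++ (v ++ t).
  by rewrite wseqS {2}wn1_eq -!catA.
rewrite {1}wn1_split cardP_cat_blk01011 -wn1_split catA -wn1_eq tail_eq; lia.
Qed.

Hypotheses (p_gt0 : 0 < p) (a_le1 : forall i, 0 < i -> a i <= 1).

Lemma size_wseq (i : nat) : Z.of_nat (size (w i))
  = ((2 ^ Z.of_nat i - 1) * (Z.of_nat p + 5) - Z.of_nat (digsum a i))%Z.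
Proof.
elim: i => [|i IHi]; first by rewrite /digsum big_geq.
have := a_le1 i.+1 isT; rewrite size_wseqS digsumS Nat2Z.inj_succ Z.pow_succ_r; lia.
Qed.

Lemma cardZ_wseq (i : nat) : Z.of_nat (cardZ (w i))
  = ((2 ^ Z.of_nat i - 1) * (Z.of_nat p + 2) - Z.of_nat (digsum a i))%Z.
Proof.
elim: i => [|i IHi]; first by rewrite /digsum big_geq.
have := a_le1 i.+1 isT; rewrite cardZ_wseqS digsumS Nat2Z.inj_succ Z.pow_succ_r; lia.
Qed.

Lemma cardP_wseq (i : nat) : Z.of_nat (cardP (w i.+1))
  = ((2 ^ Z.of_nat i.+1 - 1) * Z.of_nat p - 1 - Z.of_nat (digsum a i.+1)
     + (if p == 1%N then Z.of_nat (a i.+1) else 0))%Z.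
Proof.
elim: i => [|i IHi].
  have := a_le1 1 isT; rewrite cardP_wseq1 digsumS /digsum big_geq //.
  by case: eqP; lia.
have := a_le1 i.+1 isT; have := a_le1 i.+2 isT; move: IHi.
rewrite cardP_wseqSS (digsumS a i.+1) (Nat2Z.inj_succ i.+1) Z.pow_succ_r; last lia.
by case: eqP; lia.
Qed.

End Words.

Theorem lemma4p12 (r : R) (p : nat) (alpha : R) (a : nat -> nat) :
  Rlt (IZR 2 / IZR 5) r -> Rlt r (IZR 1) ->
  (* p = ceiling((5r-2)/(1-r)) *)
  Rlt (Rminus (INR p) (IZR 1)) (ratio r) -> Rle (ratio r) (INR p) ->
  (* alpha = p - (5r-2)/(1-r) *)
  alpha = Rminus (INR p) (ratio r) ->
  (* (a_i)_{i>=1} is the binary expansion of alpha with infinitely many zero digits *)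
  (forall i, (1 <= i)%N -> (a i <= 1)%N) ->
  infinite_sum (bin_term a) alpha ->
  (forall n, exists i, (n < i)%N /\ a i = 0%N) ->
  forall i, (1 <= i)%N ->
    Z.of_nat (size (wseq p a i))
      = ((2 ^ Z.of_nat i - 1) * (Z.of_nat p + 5) - Z.of_nat (digsum a i))%Z
 /\ Z.of_nat (cardZ (wseq p a i))
      = ((2 ^ Z.of_nat i - 1) * (Z.of_nat p + 2) - Z.of_nat (digsum a i))%Z
 /\ Z.of_nat (cardP (wseq p a i))
      = ((2 ^ Z.of_nat i - 1) * Z.of_nat p - 1 - Z.of_nat (digsum a i)
         + (if p == 1%N then Z.of_nat (a i) else 0))%Z.
Proof.
move=> r_gt r_lt1 _ ratio_le_p _ a_le1 _ _ [//|i] _.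
have p_gt0 : 0 < p.
  have := ratio_gt0 r_gt r_lt1; case: p ratio_le_p => [|//] /=; lra.
split; first exact: size_wseq.
split; first exact: cardZ_wseq.
exact: cardP_wseq.
Qed.
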